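(* Let $\mathcal S\subseteq\mathcal X\cup\mathcal Y\cup\mathcal Z$ be a set of items with $w_Z(\mathcal S)\le t-1$ and $p_Z(\mathcal S)\ge t-1$. Then there exists $i\in\{0,\dots,t-1\}$ such that $\mathcal S\cap\mathcal Z=\mathcal Z_i$.
   Context: Let $n\ge1$, $B_n=\sum_{j=1}^{3n}(3n+1)^j$, $\widetilde{\mathcal A}_n=\{(3n+1)^{j_1}+(3n+1)^{j_2}+(3n+1)^{j_3}: j_1,j_2,j_3\in\{1,\dots,3n\}\}$. Let $t$ be a power of two, $\lg$ the base-2 logarithm, and for $i\in\{0,\dots,t-1\}$ let $\mathcal A_i=\{a^i_1,\dots,a^i_{3n}\}$ be a set of $3n$ integers from $\widetilde{\mathcal A}_n$ with sum $3B_n$. Let $X=3tnB_n$, $B=B_n+nX$, $Y=3t^2nB$, $Z=(\lg t)^2Y^2 3^{(\lg t)^2}$, and fix a bijection $f:\{0,\dots,\lg t-1\}^2\to\{0,\dots,(\lg t)^2-1\}$. Items (weight $w$, profit $p$): encoding items $x^i_j$ ($0\le i\le t-1$, $1\le j\le 3n$) with $w=X+a^i_j$, $p=X+a^i_j+3iB$, forming $\mathcal X$; quadratization items forming $\mathcal Y$: for $0\le k<\ell\le\lg t-1$, $y^{1,0}_{k,\ell}$ with $w=p=3^{f(k,\ell)}Y$, $y^{0,1}_{k,\ell}$ with $w=p=3^{f(\ell,k)}Y$, $y^{1,1}_{k,\ell}$ with $w=(3^{f(k,\ell)}+3^{f(\ell,k)})Y$, $p=w+2^{k+\ell}\cdot9nB$,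 and for $0\le k\le\lg t-1$, $y^{1,1}_{k,k}$ with $w=3^{f(k,k)}Y$, $p=w+2^{2k}\cdot4.5nB+2^k\cdot1.5nB$; index items forming $\mathcal Z$: for $0\le k\le\lg t-1$, $z^0_k$ with $w=p=2^kZ+\sum_{\ell=0}^{\lg t-1}3^{f(k,\ell)}Y$ and $z^1_k$ with $w=p=2^kZ+2^k\cdot 3B$. For an item $x$, $w_Z(x)=\lfloor w(x)/Z\rfloor$ and $p_Z(x)=\lfloor p(x)/Z\rfloor$; for a set $\mathcal S$, $w_Z(\mathcal S)=\sum_{x\in\mathcal S}w_Z(x)$ and $p_Z(\mathcal S)=\sum_{x\in\mathcal S}p_Z(x)$. For $i\in\{0,\dots,t-1\}$ with binary digits $i(0),\dots,i(\lg t-1)$ (so $i=\sum_k i(k)2^k$), $\mathcal Z_i=\{z^{i(k)}_k: 0\le k\le\lg t-1\}$. *)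

From HB Require Import structures.
From mathcomp Require Import all_boot.
Set Implicit Arguments. Unset Strict Implicit. Unset Printing Implicit Defensive.

(* ItX i j    = x^i_j
   ItY10 k l  = y^{1,0}_{k,l}   (k < l)
   ItY01 k l  = y^{0,1}_{k,l}   (k < l)
   ItY11 k l  = y^{1,1}_{k,l}   (k <= l; k = l is the diagonal item y^{1,1}_{k,k})
   ItZ0 k     = z^0_k,  ItZ1 k = z^1_k *)
Inductive item :=
| ItX of nat & nat
| ItY10 of nat & nat
| ItY01 of nat & nat
| ItY11 of nat & nat
| ItZ0 of nat
| ItZ1 of nat.

Definition item_code (x : item) : nat * (nat * nat) :=
  match x with
  | ItX i j => (0, (i, j))
  | ItY10 k l => (1, (k, l))
  | ItY01 k l => (2, (k, l))
  | ItY11 k l => (3, (k, l))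
  | ItZ0 k => (4, (k, 0))
  | ItZ1 k => (5, (k, 0))
  end.

Definition item_decode (c : nat * (nat * nat)) : item :=
  match c with
  | (0, (i, j)) => ItX i j
  | (1, (k, l)) => ItY10 k l
  | (2, (k, l)) => ItY01 k l
  | (3, (k, l)) => ItY11 k l
  | (4, (k, _)) => ItZ0 k
  | (_, (k, _)) => ItZ1 k
  end.

Lemma item_codeK : cancel item_code item_decode.
Proof. by case. Qed.

HB.instance Definition _ := Equality.copy item (can_type item_codeK).

Section Construction.
(* n : the 3-partition parameter; L = lg t, i.e. t = 2^L;
   a i j = a^i_j; f : the bijection {0..L-1}^2 -> {0..L^2-1}. *)
Variables (n L : nat) (a : nat -> nat -> nat) (f : nat -> nat -> nat).

Definition tt_ := 2 ^ L.

Definition Bn := \sum_(1 <= j < (3 * n).+1) (3 * n + 1) ^ j.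

Definition in_Atilde (v : nat) : Prop :=
  exists j1 j2 j3, [/\ 1 <= j1 <= 3 * n, 1 <= j2 <= 3 * n, 1 <= j3 <= 3 * n &
    v = (3 * n + 1) ^ j1 + (3 * n + 1) ^ j2 + (3 * n + 1) ^ j3].

Definition Xc := 3 * tt_ * n * Bn.
Definition Bc := Bn + n * Xc.
Definition Yc := 3 * tt_ ^ 2 * n * Bc.
Definition Zc := L ^ 2 * Yc ^ 2 * 3 ^ (L ^ 2).

Definition valid_item (x : item) : bool :=
  match x with
  | ItX i j => (i < tt_) && (1 <= j <= 3 * n)
  | ItY10 k l => (k < l) && (l < L)
  | ItY01 k l => (k < l) && (l < L)
  | ItY11 k l => (k <= l) && (l < L)
  | ItZ0 k => k < L
  | ItZ1 k => k < L
  end.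

Definition is_Z_item (x : item) : bool :=
  match x with ItZ0 k | ItZ1 k => k < L | _ => false end.

Definition weight (x : item) : nat :=
  match x with
  | ItX i j => Xc + a i j
  | ItY10 k l => 3 ^ (f k l) * Yc
  | ItY01 k l => 3 ^ (f l k) * Yc
  | ItY11 k l => if k == l then 3 ^ (f k k) * Yc
                 else (3 ^ (f k l) + 3 ^ (f l k)) * Yc
  | ItZ0 k => 2 ^ k * Zc + \sum_(0 <= l < L) 3 ^ (f k l) * Yc
  | ItZ1 k => 2 ^ k * Zc + 2 ^ k * 3 * Bc
  end.

(* For the diagonal items, 2^(2k)*4.5nB + 2^k*1.5nB
   = (2^(2k)*9nB + 2^k*3nB)/2, which is always an integer. *)
Definition profit (x : item) : nat :=
  match x with
  | ItX i j => Xc + a i j + 3 * i * Bc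
  | ItY11 k l => if k == l
                 then weight x + (2 ^ (2 * k) * 9 * n * Bc + 2 ^ k * 3 * n * Bc) %/ 2
                 else weight x + 2 ^ (k + l) * 9 * n * Bc
  | _ => weight x
  end.

Definition wZ (x : item) : nat := weight x %/ Zc.
Definition pZ (x : item) : nat := profit x %/ Zc.
Definition wZ_set (S : seq item) : nat := \sum_(x <- S) wZ x.
Definition pZ_set (S : seq item) : nat := \sum_(x <- S) pZ x.

(* membership in Z_i = { z^{i(k)}_k : 0 <= k < L }, i(k) the k-th binary digit *)
Definition in_Zi (i : nat) (x : item) : bool :=
  match x with
  | ItZ0 k => (k < L) && ~~ odd (i %/ 2 ^ k)
  | ItZ1 k => (k < L) && odd (i %/ 2 ^ k)
  | _ => false
  end.

End Construction.

From HB Require Import structures.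
From mathcomp Require Import all_boot zify.

Set Implicit Arguments.
Unset Strict Implicit.
Unset Printing Implicit Defensive.

(* Every item's weight and profit lie in [2^k Z, 2^k Z + Z) for a z-item of
   index k, and in [0, Z) for all other items, because all the lower-order
   terms add up to far less than Z.  Hence w_Z = p_Z = Σ_k 2^k c_k, where
   c_k ∈ {0,1,2} counts the z-items of index k in S, and the two hypotheses
   force this sum to be exactly t - 1 = Σ_k 2^k.  Reading it modulo 2 shows
   c_0 = 1, and by induction every c_k = 1: S picks exactly one of z^0_k and
   z^1_k for every k, and i is the number whose k-th bit says which. *)

Lemma sum_pow2S (c : nat -> nat) L :
  \sum_(k < L.+1) 2 ^ k * c k = c 0 + 2 * \sum_(k < L) 2 ^ k * c k.+1.
Proof.
rewrite big_ord_recl expn0 mul1n big_distrr; congr (_ + _).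
by apply: eq_bigr => k _; rewrite lift0 expnS /= mulnA.
Qed.

Lemma pow2_digits_all_one L (c : nat -> nat) :
  (forall k, k < L -> c k <= 2) -> \sum_(k < L) 2 ^ k * c k = 2 ^ L - 1 ->
  forall k, k < L -> c k = 1.
Proof.
elim: L c => [|L IH] c c_le2 + k //; rewrite sum_pow2S expnS => sum_c ltkL.
have pos : 0 < 2 ^ L by rewrite expn_gt0.
have c0_le2 := c_le2 0 isT.
have [c0 sum_tail] : c 0 = 1 /\ \sum_(k < L) 2 ^ k * c k.+1 = 2 ^ L - 1 by lia.
case: k ltkL => [|k] ltkL //.
by apply: (IH (fun k => c k.+1)) => // j ltjL; apply: c_le2.
Qed.

Definition from_bits L (b : nat -> bool) : nat := \sum_(k < L) 2 ^ k * b k.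

Lemma from_bitsS L b : from_bits L.+1 b = b 0 + 2 * from_bits L (fun k => b k.+1).
Proof. exact: (sum_pow2S (fun k => b k : nat)). Qed.

Lemma from_bits_lt L b : from_bits L b < 2 ^ L.
Proof.
elim: L b => [|L IH] b; first by rewrite /from_bits big_ord0.
by rewrite from_bitsS expnS; have := IH (fun k => b k.+1); case: (b 0) => /=; lia.
Qed.

Lemma odd_from_bits L b k : k < L -> odd (from_bits L b %/ 2 ^ k) = b k.
Proof.
elim: L b k => [|L IH] b [|k] //= ltkL; rewrite from_bitsS.
  by rewrite expn0 divn1 oddD oddM addbF; case: (b 0).
rewrite expnS divnMA.
have -> : (b 0 + 2 * from_bits L (fun k => b k.+1)) %/ 2 = from_bits L (fun k => b k.+1).
  by case: (b 0) => /=; lia.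
exact: IH.
Qed.

Lemma divn_eq_between m d q : q * d <= m < q * d + d -> m %/ d = q.
Proof.
case/andP=> le lt; have d_gt0 : 0 < d by lia.
by apply/eqP; rewrite eqn_leq leq_divRL // -ltnS ltn_divLR // mulSn addnC lt.
Qed.

Definition zval (x : item) : nat :=
  match x with ItZ0 k | ItZ1 k => 2 ^ k | _ => 0 end.

Section Valuation.

Variables (n L : nat) (a f : nat -> nat -> nat).
Hypotheses (n_gt0 : 0 < n) (L_gt0 : 0 < L).
Hypothesis hA : forall i j, i < 2 ^ L -> 1 <= j <= 3 * n -> in_Atilde n (a i j).
Hypothesis hf_range : forall k l, k < L -> l < L -> f k l < L ^ 2.

Local Notation T := (tt_ L).
Local Notation B := (Bc n L).
Local Notation Y := (Yc n L).
Local Notation K := (3 ^ (L ^ 2)).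
Local Notation Z := (Zc n L).
Local Notation wt := (weight n L a f).
Local Notation pr := (profit n L a f).

Lemma pow_le_Bn j : 1 <= j <= 3 * n -> (3 * n + 1) ^ j <= Bn n.
Proof.
case/andP => j_gt0 j_le; rewrite /Bn big_nat_recr /=; last by lia.
by apply: leq_trans (leq_addl _ _); apply: leq_pexp2l; lia.
Qed.

Lemma a_le_Bn i j : i < T -> 1 <= j <= 3 * n -> a i j <= 3 * Bn n.
Proof.
move=> ltiT ltj; have [j1 [j2 [j3 [h1 h2 h3 ->]]]] := hA ltiT ltj.
by have := pow_le_Bn h1; have := pow_le_Bn h2; have := pow_le_Bn h3; lia.
Qed.

Lemma Bn_gt0 : 0 < Bn n.
Proof. by apply: leq_trans (pow_le_Bn (j := 1) _); rewrite ?expn_gt0 ?addn1 //; lia. Qed.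

Lemma Xc_le_Bc : Xc n L <= B.
Proof. by rewrite /Bc; apply: leq_trans (leq_addl _ _); apply: leq_pmull. Qed.

Lemma pow2_le_T k : k < L -> 2 ^ k <= T.
Proof. by move=> ltkL; rewrite leq_exp2l // ltnW. Qed.

Lemma T_ge2 : 2 <= T.
Proof. by rewrite -{1}(expn1 2) leq_exp2l. Qed.

Lemma TB_le_Yc : 3 * T * B <= Y.
Proof.
rewrite /Yc leq_mul2r -!mulnA leq_mul2l /=; apply/orP; right.
by rewrite leq_pmulr // muln_gt0 n_gt0 expn_gt0.
Qed.

Lemma Yc_ge8 : 8 <= Y.
Proof.
have B_ge2 : 2 <= B.
  by rewrite /Bc /Xc; have := Bn_gt0; have := T_ge2; nia.
by have := TB_le_Yc; have := T_ge2; nia.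
Qed.

Lemma lt_Zc s : s <= (L + 6) * (K * Y) -> s < Z.
Proof.
move=> le_s; apply: (leq_ltn_trans le_s).
have lt_L : L + 6 < L ^ 2 * Y by have := Yc_ge8; nia.
have -> : Z = L ^ 2 * Y * (K * Y) by rewrite /Zc; nia.
by rewrite ltn_mul2r lt_L muln_gt0 expn_gt0 /= andbT; have := Yc_ge8; lia.
Qed.

Lemma pow3f_Yc_le k l : k < L -> l < L -> 3 ^ f k l * Y <= K * Y.
Proof.
move=> ltkL ltlL; apply: leq_mul => //.
by rewrite leq_exp2l // ltnW // hf_range.
Qed.

Lemma pow2D_le_Yc k l : k < L -> l < L -> 2 ^ (k + l) * 3 * n * B <= Y.
Proof.
move=> ltkL ltlL; rewrite /Yc [3 * _]mulnC -mulnn expnD.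
by rewrite !leq_mul2r leq_mul ?pow2_le_T // !orbT.
Qed.

Lemma Yc_le_KY : Y <= K * Y.
Proof. by rewrite leq_pmull // expn_gt0. Qed.

Lemma profit_le x : valid_item n L x -> pr x <= zval x * Z + (L + 6) * (K * Y).
Proof.
have Y_le := Yc_le_KY; have TB_le := TB_le_Yc.
have B_le : B <= Y by apply: leq_trans TB_le; rewrite leq_pmull // muln_gt0 expn_gt0.
rewrite mulnDl; case: x => [i j|k l|k l|k l|k|k] /= valid_x; rewrite ?mul0n ?add0n.
- case/andP: valid_x => ltiT ltj.
  have := a_le_Bn ltiT ltj; have := Xc_le_Bc; have : Bn n <= B by apply: leq_addr.
  have : 3 * i * B <= 3 * T * B by rewrite leq_mul2r leq_mul2l ltnW ?orbT.
  (* Generalizing the products first lets [lia] treat them as atoms. *)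
  move: (Xc n L) (a i j) (Bn n) (3 * i * B) (3 * T * B) (K * Y) (L * (K * Y)) Y_le TB_le B_le => *.
  lia.
- case/andP: valid_x => ltkl ltlL; have := pow3f_Yc_le (ltn_trans ltkl ltlL) ltlL.
  move: (3 ^ f k l * Y) (K * Y) (L * (K * Y)) => *; lia.
- case/andP: valid_x => ltkl ltlL; have := pow3f_Yc_le ltlL (ltn_trans ltkl ltlL).
  move: (3 ^ f l k * Y) (K * Y) (L * (K * Y)) => *; lia.
- case/andP: valid_x => lekl ltlL; have ltkL := leq_ltn_trans lekl ltlL.
  have := pow2D_le_Yc ltkL ltlL; have := pow2D_le_Yc ltkL L_gt0; rewrite addn0.
  case: eqP => [<-|_].
    have := pow3f_Yc_le ltkL ltkL; rewrite mul2n -addnn.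
    move: (3 ^ f k k * Y) (K * Y) (L * (K * Y)) (2 ^ (k + k)) (2 ^ k) Y_le => *.
    lia.
  have := pow3f_Yc_le ltkL ltlL; have := pow3f_Yc_le ltlL ltkL; rewrite mulnDl.
  move: (3 ^ f k l * Y) (3 ^ f l k * Y) (K * Y) (L * (K * Y)) (2 ^ (k + l)) Y_le => *.
  lia.
- rewrite leq_add2l; apply: leq_trans (leq_addr _ _).
  rewrite -[L in L * _]subn0 -sum_nat_const_nat big_nat [X in _ <= X]big_nat.
  by apply: leq_sum => l /andP[_ ltlL]; apply: pow3f_Yc_le.
- rewrite leq_add2l; have : 2 ^ k * 3 * B <= 3 * T * B.
    by rewrite leq_mul2r [3 * T]mulnC leq_mul2r pow2_le_T ?orbT.
  move: (2 ^ k * 3 * B) (3 * T * B) (K * Y) (L * (K * Y)) Y_le TB_le => *; lia.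
Qed.

Lemma zval_Zc_le_weight x : zval x * Z <= wt x.
Proof. by case: x => * /=; rewrite ?mul0n ?leq_addr. Qed.

Lemma weight_le_profit x : wt x <= pr x.
Proof. by case: x => [*|*|*|k l|*|*] /=; rewrite ?leq_addr //; case: ifP; rewrite leq_addr. Qed.

Lemma profit_lt x : valid_item n L x -> pr x < zval x * Z + Z.
Proof.
move=> valid_x; apply: leq_ltn_trans (profit_le valid_x) _.
by rewrite ltn_add2l lt_Zc.
Qed.

Lemma wZ_zval x : valid_item n L x -> wZ n L a f x = zval x.
Proof.
move=> valid_x; apply: divn_eq_between.
by rewrite zval_Zc_le_weight (leq_ltn_trans (weight_le_profit x)) ?profit_lt.
Qed.

Lemma pZ_zval x : valid_item n L x -> pZ n L a f x = zval x.
Proof.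
move=> valid_x; apply: divn_eq_between.
by rewrite (leq_trans (zval_Zc_le_weight x)) ?weight_le_profit ?profit_lt.
Qed.

Lemma wZ_set_zval S : all (valid_item n L) S -> wZ_set n L a f S = \sum_(x <- S) zval x.
Proof.
move/allP=> validS; rewrite /wZ_set big_seq [RHS]big_seq.
by apply: eq_bigr => x /validS/wZ_zval.
Qed.

Lemma pZ_set_zval S : all (valid_item n L) S -> pZ_set n L a f S = \sum_(x <- S) zval x.
Proof.
move/allP=> validS; rewrite /pZ_set big_seq [RHS]big_seq.
by apply: eq_bigr => x /validS/pZ_zval.
Qed.

End Valuation.

Lemma zval_bigE n L x : valid_item n L x ->
  zval x = \sum_(k < L) 2 ^ k * ((x == ItZ0 k) + (x == ItZ1 k)).
Proof.
have Z0_inj : injective ItZ0 by move=> ? ? [].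
have Z1_inj : injective ItZ1 by move=> ? ? [].
case: x => [? ?|? ?|? ?|? ?|k|k] /= valid_x; last 2 first.
- rewrite (bigD1 (Ordinal valid_x)) //= eqxx big1 ?addn0 ?muln1 // => j ne_jk.
  by rewrite (inj_eq Z0_inj) eq_sym (negbTE ne_jk : (j == k :> nat) = false) muln0.
- rewrite (bigD1 (Ordinal valid_x)) //= eqxx big1 ?addn0 ?muln1 // => j ne_jk.
  by rewrite (inj_eq Z1_inj) eq_sym (negbTE ne_jk : (j == k :> nat) = false) muln0.
all: by rewrite big1 // => j _; rewrite muln0.
Qed.

Lemma sum_zval n L (S : seq item) : uniq S -> all (valid_item n L) S ->
  \sum_(x <- S) zval x = \sum_(k < L) 2 ^ k * ((ItZ0 k \in S) + (ItZ1 k \in S)).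
Proof.
move=> uniqS /allP validS.
rewrite big_seq (eq_bigr _ (fun x xS => zval_bigE (validS x xS))) -big_seq.
rewrite exchange_big; apply: eq_bigr => k _; rewrite -big_distrr big_split /=.
by rewrite -!count_uniq_mem // -!sumn_count !sumnE !big_map.
Qed.

Theorem lemma5 (n L : nat) (a : nat -> nat -> nat) (f : nat -> nat -> nat)
  (hn : 1 <= n)
  (hA : forall i j, i < 2 ^ L -> 1 <= j <= 3 * n -> in_Atilde n (a i j))
  (hAsum : forall i, i < 2 ^ L ->
     \sum_(1 <= j < (3 * n).+1) a i j = 3 * Bn n)
  (hf_range : forall k l, k < L -> l < L -> f k l < L ^ 2)
  (hf_inj : forall k l k' l', k < L -> l < L -> k' < L -> l' < L ->
     f k l = f k' l' -> k = k' /\ l = l')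
  (hf_surj : forall m, m < L ^ 2 -> exists k l, [/\ k < L, l < L & f k l = m])
  (S : seq item)
  (hSuniq : uniq S)
  (hSvalid : all (valid_item n L) S)
  (hw : wZ_set n L a f S <= 2 ^ L - 1)
  (hp : 2 ^ L - 1 <= pZ_set n L a f S) :
  exists i, i < 2 ^ L /\
    forall x : item, (x \in S) && is_Z_item L x = in_Zi L i x.
Proof.
have [-> | L_gt0] := posnP L.
  by exists 0; split=> // -[] * /=; rewrite ?andbF.
set c := fun k => (ItZ0 k \in S) + (ItZ1 k \in S).
have zval_S : \sum_(x <- S) zval x = \sum_(k < L) 2 ^ k * c k := sum_zval hSuniq hSvalid.
have wZ_S := wZ_set_zval hn L_gt0 hA hf_range hSvalid.
have pZ_S := pZ_set_zval hn L_gt0 hA hf_range hSvalid.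
have c_eq1 : forall k, k < L -> c k = 1.
  apply: pow2_digits_all_one => [k _|]; first by rewrite /c; case: (_ \in S); case: (_ \in S).
  by rewrite -zval_S; lia.
exists (from_bits L (fun k => ItZ1 k \in S)); split; first exact: from_bits_lt.
case=> [? ?|? ?|? ?|? ?|k|k] /=; rewrite ?andbF //.
all: case: (ltnP k L) => [ltkL|_]; rewrite ?andbF // andbT odd_from_bits //.
by move: (c_eq1 k ltkL); rewrite /c; case: (_ \in S); case: (_ \in S).
Qed.
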